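(* Let $(\Theta,\mathbf{Q},\leq)$ be a $\Theta$-projective system of size $t$ in an artin triangulated $R$-category $\mathcal{T}$, with triangles $K(i)\to Q(i)\to\Theta(i)\to K(i)[1]$. If $\mathrm{Hom}_\mathcal{T}(K(j)[2],\Theta(i))=0$ for all $i,j\in[1,t]$, then $(\Theta,\leq)$ is a $\Theta$-system of size $t$ in $\mathcal{T}$.
   Context: Artin triangulated $R$-category: triangulated, $R$ commutative artinian, Hom-sets finitely generated $R$-modules, $R$-bilinear composition, $R$-linear shift, Krull–Schmidt. $\mathfrak{F}(\mathcal{X})$: objects $M$ admitting distinguished triangles $M_{k-1}\to M_k\to X_k\to M_{k-1}[1]$ ($k=0,\dots,n$), $M_{-1}=0=X_0$, $M_n=M$, $X_k\in\mathcal{X}$ for $k\ge1$. A $\Theta$-projective system of size $t$: $\le$ a linear order on $[1,t]$; $\Theta(i)$ non-zero with $\mathrm{Hom}(\Theta(j),\Theta(i))=0$ for $j>i$; $Q(i)$ indecomposable with $Q=\bigoplus Q(i)$ satisfying $\mathrm{Hom}(Q,\Theta(j)[\pm1])=0$ for all $j$; for each $i$ a distinguished triangle $K(i)\to Q(i)\to\Theta(i)\to K(i)[1]$ with $K(i)\in\mathfrak{F}(\{\Theta(j):j>i\})$, $\mathrm{Hom}(K(i)[1],\Theta(i))=0$. A $\Theta$-system of size $t$: linear order $\le$ on $[1,t]$, indecomposable $\Theta(i)$, $\mathrm{Hom}(\Theta(j),\Theta(i))=0$ for $j>i$, $\mathrm{Hom}(\Theta(j),\Theta(i)[1])=0$ for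 $j\ge i$, $\mathrm{Hom}(\Theta(i),\Theta(j)[-1])=0$ for all $i,j$. *)

From HB Require Import structures.
From mathcomp Require Import all_boot all_order all_algebra.
Set Implicit Arguments.
Unset Strict Implicit.
Unset Printing Implicit Defensive.
Import GRing.Theory.
Local Open Scope ring_scope.

Definition is_ideal (R : comPzRingType) (I : R -> Prop) : Prop :=
  [/\ I 0, (forall x y, I x -> I y -> I (x + y)) &
      (forall r x, I x -> I (r * x))].

Definition artinian_ring (R : comPzRingType) : Prop :=
  forall I : nat -> R -> Prop,
    (forall n, is_ideal (I n)) ->
    (forall n x, I n.+1 x -> I n x) ->
    exists N, forall n, (N <= n)%N -> forall x, I n x <-> I N x.

Definition fin_gen_lmod (R : comPzRingType) (V : lmodType R) : Prop :=
  exists s : seq V, forall v : V,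
    exists c : 'I_(size s) -> R, v = \sum_(k < size s) c k *: s`_k.

Record TriData (R : comPzRingType) := {
  Obj : Type;
  Mor : Obj -> Obj -> lmodType R;
  idm : forall X, Mor X X;
  comp : forall X Y Z, Mor Y Z -> Mor X Y -> Mor X Z;
  sh : Obj -> Obj;
  shm : forall X Y, Mor X Y -> Mor (sh X) (sh Y);
  unsh : Obj -> Obj;
  dist : forall X Y Z, Mor X Y -> Mor Y Z -> Mor Z (sh X) -> Prop
}.
Arguments idm {R T} X : rename.
Arguments comp {R T X Y Z} g f : rename.
Arguments sh {R T} X : rename.
Arguments shm {R T X Y} f : rename.
Arguments unsh {R T} X : rename.
Arguments dist {R T X Y Z} u v w : rename.
Arguments Mor {R T} X Y : rename.

Section Defs.
Variables (R : comPzRingType) (T : TriData R).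

Definition isIso (X Y : Obj T) (f : Mor X Y) : Prop :=
  exists g : Mor Y X, comp g f = idm X /\ comp f g = idm Y.

Definition iso_obj (X Y : Obj T) : Prop := exists f : Mor X Y, isIso f.

Definition isZero (X : Obj T) : Prop := idm X = 0.

Definition hom_zero (X Y : Obj T) : Prop := forall f : Mor X Y, f = 0.

Definition is_dsum (n : nat) (A : 'I_n -> Obj T) (S : Obj T) : Prop :=
  exists (inj : forall k, Mor (A k) S) (proj : forall k, Mor S (A k)),
    (forall k, comp (proj k) (inj k) = idm (A k)) /\
    (forall k l, k != l -> comp (proj k) (inj l) = 0) /\
    \sum_(k < n) comp (inj k) (proj k) = idm S.

Definition is_biprod (A B S : Obj T) : Prop :=
  exists (i1 : Mor A S) (i2 : Mor B S) (p1 : Mor S A) (p2 : Mor S B),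
    [/\ comp p1 i1 = idm A, comp p2 i2 = idm B, comp p1 i2 = 0,
        comp p2 i1 = 0 & comp i1 p1 + comp i2 p2 = idm S].

Definition indecomposable (X : Obj T) : Prop :=
  ~ isZero X /\ forall A B : Obj T, is_biprod A B X -> isZero A \/ isZero B.

Definition local_end (X : Obj T) : Prop :=
  idm X != 0 /\ forall f : Mor X X, isIso f \/ isIso (idm X - f).

Definition tri_iso (X Y Z X' Y' Z' : Obj T)
    (u : Mor X Y) (v : Mor Y Z) (w : Mor Z (sh X))
    (u' : Mor X' Y') (v' : Mor Y' Z') (w' : Mor Z' (sh X')) : Prop :=
  exists (a : Mor X X') (b : Mor Y Y') (c : Mor Z Z'),
    [/\ isIso a, isIso b, isIso c &
        [/\ comp u' a = comp b u, comp v' b = comp c v &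
        comp w' c = comp (shm a) w]].

Definition linear_cat_axioms : Prop :=
  [/\ (forall (X Y Z W : Obj T) (h : Mor Z W) (g : Mor Y Z) (f : Mor X Y),
          comp h (comp g f) = comp (comp h g) f),
      (forall (X Y : Obj T) (f : Mor X Y), comp (idm Y) f = f /\ comp f (idm X) = f),
      (forall (X Y Z : Obj T) (g : Mor Y Z) (r : R) (f1 f2 : Mor X Y),
          comp g (r *: f1 + f2) = r *: comp g f1 + comp g f2),
      (forall (X Y Z : Obj T) (f : Mor X Y) (r : R) (g1 g2 : Mor Y Z),
          comp (r *: g1 + g2) f = r *: comp g1 f + comp g2 f) &
      ((exists Z0, isZero Z0) /\ forall A B : Obj T, exists S, is_biprod A B S)].

Definition shift_axioms : Prop :=
  [/\ (forall (X Y : Obj T) (r : R) (f g : Mor X Y), shm (r *: f + g) = r *: shm f + shm g),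
      (forall (X Y Z : Obj T) (g : Mor Y Z) (f : Mor X Y), shm (comp g f) = comp (shm g) (shm f)),
      (forall X : Obj T, shm (idm X) = idm (sh X)),
      (forall X Y : Obj T, bijective (@shm R T X Y)) &
      (* essentially surjective, with chosen inverse X[-1] *)
      (forall X : Obj T, iso_obj (sh (unsh X)) X)].

Definition TR1 : Prop :=
  [/\ (forall (X Y Z X' Y' Z' : Obj T) (u : Mor X Y) (v : Mor Y Z) (w : Mor Z (sh X))
          (u' : Mor X' Y') (v' : Mor Y' Z') (w' : Mor Z' (sh X')),
          dist u v w -> tri_iso u v w u' v' w' -> dist u' v' w'),
      (forall X Z0 : Obj T, isZero Z0 -> dist (idm X) (0 : Mor X Z0) (0 : Mor Z0 (sh X))) &
      (forall (X Y : Obj T) (u : Mor X Y), exists Z (v : Mor Y Z) (w : Mor Z (sh X)), dist u v w)].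

Definition TR2 : Prop :=
  forall (X Y Z : Obj T) (u : Mor X Y) (v : Mor Y Z) (w : Mor Z (sh X)),
    dist u v w <-> dist v w (- shm u).

Definition TR3 : Prop :=
  forall (X Y Z X' Y' Z' : Obj T) (u : Mor X Y) (v : Mor Y Z) (w : Mor Z (sh X))
    (u' : Mor X' Y') (v' : Mor Y' Z') (w' : Mor Z' (sh X'))
    (a : Mor X X') (b : Mor Y Y'),
    dist u v w -> dist u' v' w' -> comp u' a = comp b u ->
    exists c : Mor Z Z', comp v' b = comp c v /\ comp w' c = comp (shm a) w.

Definition TR4 : Prop :=
  forall (X Y Z Z' X' Y' : Obj T) (u : Mor X Y) (v : Mor Y Z)
    (j : Mor Y Z') (k : Mor Z' (sh X))
    (l : Mor Z X') (i : Mor X' (sh Y))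
    (m : Mor Z Y') (n : Mor Y' (sh X)),
    dist u j k -> dist v l i -> dist (comp v u) m n ->
    exists (f : Mor Z' Y') (g : Mor Y' X'),
      [/\ dist f g (comp (shm j) i),
          comp f j = comp m v, comp n f = k,
          comp g m = l & comp (shm u) n = comp i g].

Definition is_triangulated : Prop :=
  [/\ linear_cat_axioms, shift_axioms, TR1, TR2 & (TR3 /\ TR4)].

Definition krull_schmidt : Prop :=
  forall X : Obj T, exists n (A : 'I_n -> Obj T), (forall k, local_end (A k)) /\ is_dsum A X.

Definition artin_triangulated : Prop :=
  [/\ artinian_ring R, is_triangulated,
      (forall X Y : Obj T, fin_gen_lmod (Mor X Y)) & krull_schmidt].

(* F(P): objects with a finite filtration by distinguished triangles
   M_{k-1} -> M_k -> X_k -> M_{k-1}[1], k = 0..n, M_{-1} = 0 = X_0, M_n = M,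
   X_k in P for k >= 1.  Here Ms k stands for M_{k-1}. *)
Definition in_filt (P : Obj T -> Prop) (M : Obj T) : Prop :=
  exists (n : nat) (Ms : nat -> Obj T) (Xs : nat -> Obj T)
         (f : forall k, Mor (Ms k) (Ms k.+1))
         (g : forall k, Mor (Ms k.+1) (Xs k))
         (h : forall k, Mor (Xs k) (sh (Ms k))),
    [/\ isZero (Ms 0), isZero (Xs 0), Ms n.+1 = M,
        (forall k, (1 <= k <= n)%N -> P (Xs k)) &
        (forall k, (k <= n)%N -> dist (f k) (g k) (h k))].

End Defs.

Definition gtr (t : nat) (le : rel 'I_t) (j i : 'I_t) : bool := le i j && (j != i).

Definition linear_order (t : nat) (le : rel 'I_t) : Prop :=
  [/\ reflexive le, antisymmetric le, transitive le & total le].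

Definition theta_proj_system (R : comPzRingType) (T : TriData R) (t : nat)
    (le : rel 'I_t) (Theta Qi K : 'I_t -> Obj T) (Q : Obj T)
    (a : forall i, Mor (K i) (Qi i)) (b : forall i, Mor (Qi i) (Theta i))
    (c : forall i, Mor (Theta i) (sh (K i))) : Prop :=
  [/\ linear_order le,
      (forall i, ~ isZero (Theta i)),
      (forall i j, gtr le j i -> hom_zero (Theta j) (Theta i)),
      ((forall i, indecomposable (Qi i)) /\ is_dsum Qi Q /\
       (forall j, hom_zero Q (sh (Theta j)) /\ hom_zero Q (unsh (Theta j)))) &
      (forall i, [/\ dist (a i) (b i) (c i),
                     in_filt (fun M => exists j, gtr le j i /\ M = Theta j) (K i) &
                     hom_zero (sh (K i)) (Theta i)])].

Definition theta_system (R : comPzRingType) (T : TriData R) (t : nat)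
    (le : rel 'I_t) (Theta : 'I_t -> Obj T) : Prop :=
  [/\ linear_order le,
      (forall i, indecomposable (Theta i)),
      (forall i j, gtr le j i -> hom_zero (Theta j) (Theta i)),
      (forall i j, le i j -> hom_zero (Theta j) (sh (Theta i))) &
      (forall i j, hom_zero (Theta i) (unsh (Theta j)))].

Arguments theta_proj_system {R T t} le Theta Qi K Q a b c.
Arguments theta_system {R T t} le Theta.

(* Rotating K(i) -> Q(i) -> Theta(i) -> K(i)[1] shows that a map out of Theta(i)
   vanishing on Q(i) factors through K(i)[1].  Induction along the filtrations of
   the K(j) by the Theta(l), l > j, gives Hom(Q, K(j)[1]) = 0 and
   Hom(K(j), Theta(i)) = 0 for i <= j.  Hence Hom(Theta(j), Theta(i)[1]) = 0 for
   i <= j, Hom(Theta(i), Theta(j)[-1]) = 0 from the hypothesis on K(j)[2], and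
   Q(i) -> Theta(i) is right cancellable since Hom(K(i)[1], Theta(i)) = 0.  An
   idempotent e of Theta(i) then lifts to an endomorphism f of Q(i), whose
   endomorphism ring is local by Krull-Schmidt: f or 1 - f is invertible, which
   forces e = 1 or e = 0, so Theta(i) is indecomposable. *)

From mathcomp Require Import all_boot all_order all_algebra.
Set Implicit Arguments. Unset Strict Implicit. Unset Printing Implicit Defensive.
Import GRing.Theory.
Local Open Scope ring_scope.

Lemma additive_map0 (U V : zmodType) (f : U -> V) :
  {morph f : x y / x + y} -> f 0 = 0.
Proof. by move=> fD; apply: (addrI (f 0)); rewrite -fD !addr0. Qed.

Lemma additive_mapN (U V : zmodType) (f : U -> V) :
  {morph f : x y / x + y} -> {morph f : x / - x}.
Proof. by move=> fD x; apply: (addrI (f x)); rewrite -fD !subrr (additive_map0 fD). Qed.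

Lemma gtr_le_trans (t : nat) (le : rel 'I_t) (i j l : 'I_t) :
  antisymmetric le -> transitive le -> le i j -> gtr le l j -> gtr le l i.
Proof.
move=> anti trans le_ij /andP [le_jl ne_lj]; rewrite /gtr (trans _ _ _ le_ij le_jl).
by apply: contraNneq ne_lj => eq_li; rewrite eq_li (anti i j) // le_ij -eq_li.
Qed.

Section LinearCategory.
Variables (R : comPzRingType) (T : TriData R).
Hypothesis lin : linear_cat_axioms T.

Lemma compA (X Y Z W : Obj T) (h : Mor Z W) (g : Mor Y Z) (f : Mor X Y) :
  comp h (comp g f) = comp (comp h g) f.
Proof. by case: lin => A _ _ _ _; apply: A. Qed.

Lemma comp1m (X Y : Obj T) (f : Mor X Y) : comp (idm Y) f = f.
Proof. by case: lin => _ A _ _ _; case: (A _ _ f). Qed.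

Lemma compm1 (X Y : Obj T) (f : Mor X Y) : comp f (idm X) = f.
Proof. by case: lin => _ A _ _ _; case: (A _ _ f). Qed.

Lemma compDr (X Y Z : Obj T) (g : Mor Y Z) : {morph @comp _ _ X Y Z g : f1 f2 / f1 + f2}.
Proof. by case: lin => _ _ A _ _ f1 f2; have := A _ _ _ g 1 f1 f2; rewrite !scale1r. Qed.

Lemma compDl (X Y Z : Obj T) (f : Mor X Y) : {morph @comp _ _ X Y Z ^~ f : g1 g2 / g1 + g2}.
Proof. by case: lin => _ _ _ A _ g1 g2; have := A _ _ _ f 1 g1 g2; rewrite !scale1r. Qed.

Lemma comp0r (X Y Z : Obj T) (g : Mor Y Z) : comp g (0 : Mor X Y) = 0.
Proof. exact: additive_map0 (compDr g). Qed.

Lemma comp0l (X Y Z : Obj T) (f : Mor X Y) : comp (0 : Mor Y Z) f = 0.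
Proof. exact: additive_map0 (compDl f). Qed.

Lemma compNr (X Y Z : Obj T) (g : Mor Y Z) (f : Mor X Y) : comp g (- f) = - comp g f.
Proof. exact: (additive_mapN (compDr g) f). Qed.

Lemma compNl (X Y Z : Obj T) (g : Mor Y Z) (f : Mor X Y) : comp (- g) f = - comp g f.
Proof. exact: (additive_mapN (compDl f) g). Qed.

Lemma compBr (X Y Z : Obj T) (g : Mor Y Z) (f1 f2 : Mor X Y) :
  comp g (f1 - f2) = comp g f1 - comp g f2.
Proof. by rewrite compDr compNr. Qed.

Lemma compBl (X Y Z : Obj T) (f : Mor X Y) (g1 g2 : Mor Y Z) :
  comp (g1 - g2) f = comp g1 f - comp g2 f.
Proof. by rewrite compDl compNl. Qed.

Lemma hom_from_zero (Z Y : Obj T) (f : Mor Z Y) : isZero Z -> f = 0.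
Proof. by move=> Z0; rewrite -(compm1 f) Z0 comp0r. Qed.

Lemma hom_to_zero (Z Y : Obj T) (f : Mor Y Z) : isZero Z -> f = 0.
Proof. by move=> Z0; rewrite -(comp1m f) Z0 comp0l. Qed.

Lemma idempotentB (X : Obj T) (e : Mor X X) :
  comp e e = e -> comp (idm X - e) (idm X - e) = idm X - e.
Proof. by move=> ee; rewrite compBl !compBr !comp1m compm1 ee subrr subr0. Qed.

Lemma indecomposable_of_idempotents (X : Obj T) :
  ~ isZero X -> (forall e : Mor X X, comp e e = e -> e = 0 \/ e = idm X) ->
  indecomposable X.
Proof.
move=> X0 idemX; split=> // A B [i1 [i2 [p1 [p2 [p1i1 p2i2 p1i2 p2i1 _]]]]].
have ee : comp (comp i1 p1) (comp i1 p1) = comp i1 p1.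
  by rewrite compA -(compA i1) p1i1 compm1.
have [e0|e1] := idemX _ ee; [left | right]; rewrite /isZero.
- have -> : idm A = comp p1 (comp (comp i1 p1) i1) by rewrite -compA p1i1 compm1 p1i1.
  by rewrite e0 comp0l comp0r.
- have -> : idm B = comp p2 (comp (idm X) i2) by rewrite comp1m p2i2.
  by rewrite -e1 -compA p1i2 !comp0r.
Qed.

Lemma dsum_hom_zero (n : nat) (A : 'I_n -> Obj T) (S X : Obj T) (k : 'I_n) :
  is_dsum A S -> hom_zero S X -> hom_zero (A k) X.
Proof.
move=> [inj [proj [pi _]]] SX f.
by rewrite -(compm1 f) -pi compA (SX (comp f (proj k))) comp0l.
Qed.

Lemma isIso_conj (A X : Obj T) (u : Mor A X) (p : Mor X A) (g : Mor A A) :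
  comp p u = idm A -> comp u p = idm X -> isIso g -> isIso (comp u (comp g p)).
Proof.
move=> pu up [g' [g'g gg']]; exists (comp u (comp g' p)).
by split; rewrite -!compA (compA p u) pu comp1m (compA _ _ p) ?g'g ?gg' comp1m.
Qed.

Section Triangulated.
Hypotheses (shift : shift_axioms T) (tr1 : TR1 T) (tr2 : TR2 T) (tr3 : TR3 T).

Lemma shmD (X Y : Obj T) : {morph @shm _ _ X Y : f g / f + g}.
Proof. by case: shift => A _ _ _ _ f g; have := A _ _ 1 f g; rewrite !scale1r. Qed.

Lemma shm0 (X Y : Obj T) : shm (0 : Mor X Y) = 0.
Proof. exact: additive_map0 (@shmD X Y). Qed.

Lemma shm_comp (X Y Z : Obj T) (g : Mor Y Z) (f : Mor X Y) :
  shm (comp g f) = comp (shm g) (shm f).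
Proof. by case: shift. Qed.

Lemma shm1 (X : Obj T) : shm (idm X) = idm (sh X).
Proof. by case: shift. Qed.

Lemma shm_inj (X Y : Obj T) : injective (@shm _ _ X Y).
Proof. by case: shift => _ _ _ /(_ X Y) /bij_inj. Qed.

Lemma shm_surj (X Y : Obj T) (f : Mor (sh X) (sh Y)) : exists g, f = shm g.
Proof. by case: shift => _ _ _ /(_ X Y) [h _ hK] _; exists (h f); rewrite hK. Qed.

Lemma isZero_sh (Z : Obj T) : isZero Z -> isZero (sh Z).
Proof. by rewrite /isZero -shm1 => ->; rewrite shm0. Qed.

Lemma exists_zero : exists Z : Obj T, isZero Z.
Proof. by case: lin => _ _ _ _ []. Qed.

Lemma dist_rot (X Y Z : Obj T) (u : Mor X Y) (v : Mor Y Z) (w : Mor Z (sh X)) :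
  dist u v w -> dist v w (- shm u).
Proof. exact: (tr2 u v w).1. Qed.

Lemma dist_shift (X Y Z : Obj T) (u : Mor X Y) (v : Mor Y Z) (w : Mor Z (sh X)) :
  dist u v w -> dist (- shm u) (- shm v) (- shm w).
Proof. by move/dist_rot/dist_rot/dist_rot. Qed.

Lemma dist_id_zero (X Z : Obj T) : isZero Z -> dist (idm X) (0 : Mor X Z) 0.
Proof. by case: tr1 => _ + _; apply. Qed.

Lemma dist_zero_id (Z W : Obj T) : isZero Z -> dist (0 : Mor Z W) (idm W) 0.
Proof.
move=> Z0; apply/tr2; rewrite shm0 oppr0.
exact/dist_id_zero/isZero_sh.
Qed.

Lemma dist_comp0 (X Y Z : Obj T) (u : Mor X Y) (v : Mor Y Z) (w : Mor Z (sh X)) :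
  dist u v w -> comp v u = 0.
Proof.
move=> uvw; have [Z0 Z0_0] := exists_zero.
have [h [hv _]] := tr3 (dist_id_zero X Z0_0) uvw erefl.
by rewrite hv comp0r.
Qed.

Lemma dist_weak_coker (X Y Z W : Obj T) (u : Mor X Y) (v : Mor Y Z) (w : Mor Z (sh X))
    (g : Mor Y W) :
  dist u v w -> comp g u = 0 -> exists h : Mor Z W, g = comp h v.
Proof.
move=> uvw gu; have [Z0 Z0_0] := exists_zero.
have sq : comp 0 (0 : Mor X Z0) = comp g u by rewrite comp0r gu.
have [h [hv _]] := tr3 uvw (dist_zero_id W Z0_0) sq.
by exists h; rewrite -hv comp1m.
Qed.

Lemma dist_weak_ker (X Y Z W : Obj T) (u : Mor X Y) (v : Mor Y Z) (w : Mor Z (sh X))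
    (g : Mor W Y) :
  dist u v w -> comp v g = 0 -> exists h : Mor W X, g = comp u h.
Proof.
move=> uvw vg; have [Z0 Z0_0] := exists_zero.
have sq : comp v g = comp 0 (0 : Mor W Z0) by rewrite comp0r vg.
have [c [_ wc]] := tr3 (dist_rot (dist_id_zero W Z0_0)) (dist_rot uvw) sq.
have [h ch] := shm_surj c; exists h; apply: shm_inj.
move: wc; rewrite ch compNl compNr shm1 compm1 => /oppr_inj.
by rewrite shm_comp.
Qed.

Lemma in_filt_hom_zero (P : Obj T -> Prop) (M W : Obj T) :
  in_filt P M -> (forall X, P X -> hom_zero X W) -> hom_zero M W.
Proof.
move=> [n [Ms [Xs [f [g [h [Ms0 Xs0 <- PXs dist_k]]]]]]] PW.
suff : forall k, (k <= n.+1)%N -> hom_zero (Ms k) W by apply.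
elim=> [_|k IHk ltkn] phi; first exact: hom_from_zero.
have [psi ->] := dist_weak_coker (dist_k k ltkn) (IHk (ltnW ltkn) (comp phi (f k))).
suff -> : psi = 0 by rewrite comp0l.
case: k ltkn {IHk} phi psi => [|k] ltkn phi psi; first exact: hom_from_zero.
exact/PW/PXs.
Qed.

Lemma in_filt_hom_zero_sh (P : Obj T -> Prop) (M Y : Obj T) :
  in_filt P M -> (forall X, P X -> hom_zero Y (sh X)) -> hom_zero Y (sh M).
Proof.
move=> [n [Ms [Xs [f [g [h [Ms0 Xs0 <- PXs dist_k]]]]]]] PY.
suff : forall k, (k <= n.+1)%N -> hom_zero Y (sh (Ms k)) by apply.
elim=> [_|k IHk ltkn] phi; first exact/hom_to_zero/isZero_sh.
have gphi : comp (- shm (g k)) phi = 0.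
  case: k ltkn {IHk} phi => [|k] ltkn phi; first exact/hom_to_zero/isZero_sh.
  exact/PY/PXs.
have [psi ->] := dist_weak_ker (dist_shift (dist_k k ltkn)) gphi.
by rewrite (IHk (ltnW ltkn) psi) comp0r.
Qed.

Lemma split_mono_biprod (A X : Obj T) (u : Mor A X) (p : Mor X A) :
  comp p u = idm A ->
  exists (C : Obj T) (s : Mor C X) (v : Mor X C),
    [/\ comp v s = idm C, comp p s = 0, comp v u = 0 & comp u p + comp s v = idm X].
Proof.
move=> pu; have [_ _ cone_u] := tr1; have [C [v [w uvw]]] := cone_u _ _ u.
have vwu := dist_rot uvw; have vu := dist_comp0 uvw.
have w0 : w = 0.
  have /eqP := dist_comp0 (dist_rot vwu); rewrite compNl oppr_eq0 => /eqP uw.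
  by rewrite -[w]comp1m -shm1 -pu shm_comp -compA uw comp0r.
have [s0 s0v] : exists s0, idm C = comp v s0.
  by apply: (dist_weak_ker vwu); rewrite w0 comp0l.
set s := s0 - comp u (comp p s0).
have vs : comp v s = idm C by rewrite compBr compA vu comp0l subr0 -s0v.
have ps : comp p s = 0 by rewrite compBr compA pu comp1m subrr.
exists C, s, v; split=> //.
set D := idm X - comp u p - comp s v.
have [h hv] : exists h, D = comp h v.
  by apply: (dist_weak_coker uvw); rewrite !compBl comp1m -!compA pu vu compm1 !comp0r !subrr.
have Ds : comp D s = 0.
  by rewrite !compBl comp1m -!compA ps vs comp0r compm1 subr0 subrr.
have h0 : h = 0 by rewrite -[h]compm1 -vs compA -hv Ds.
by apply/eqP; rewrite eq_sym -subr_eq0 opprD addrA -/D hv h0 comp0l.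
Qed.

Lemma split_mono_indecomposable (A X : Obj T) (u : Mor A X) (p : Mor X A) :
  comp p u = idm A -> indecomposable X -> ~ isZero A -> comp u p = idm X.
Proof.
move=> pu [_ decX] A0; have [C [s [v [vs ps vu upsv]]]] := split_mono_biprod pu.
have : is_biprod A C X by exists u, s, p, v.
case/decX => [//|C0].
by rewrite -upsv (hom_from_zero s C0) comp0l addr0.
Qed.

Lemma indecomposable_local (X : Obj T) :
  krull_schmidt T -> indecomposable X -> forall f : Mor X X, isIso f \/ isIso (idm X - f).
Proof.
move=> KS decX f; have [[|n] [A [Aloc [inj [proj [pi [_ sum_ip]]]]]]] := KS X.
  by case: decX.1; rewrite /isZero -sum_ip big_ord0.
set u := inj ord0; set p := proj ord0.
have pu : comp p u = idm (A ord0) by exact: pi.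
have up : comp u p = idm X.
  by apply: split_mono_indecomposable pu decX _; case: (Aloc ord0) => /eqP.
have fE : f = comp u (comp (comp p (comp f u)) p).
  by rewrite !compA up comp1m -compA up compm1.
have [isof|isoBf] := (Aloc ord0).2 (comp p (comp f u)); [left | right].
  by rewrite fE; apply: isIso_conj.
by move: (isIso_conj pu up isoBf); rewrite compBl comp1m compBr -fE up.
Qed.

Section ThetaProjectiveSystem.
Variables (t : nat) (le : rel 'I_t) (Theta Qi K : 'I_t -> Obj T) (Q : Obj T).
Variables (a : forall i, Mor (K i) (Qi i)) (b : forall i, Mor (Qi i) (Theta i))
  (c : forall i, Mor (Theta i) (sh (K i))).
Hypothesis proj_sys : theta_proj_system le Theta Qi K Q a b c.

Lemma Qi_hom_zero_sh_Theta (i j : 'I_t) : hom_zero (Qi i) (sh (Theta j)).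
Proof. by have [_ _ _ [_ [dsumQ /(_ j) [QTh _]]] _] := proj_sys; exact: dsum_hom_zero dsumQ QTh. Qed.

Lemma Qi_hom_zero_unsh_Theta (i j : 'I_t) : hom_zero (Qi i) (unsh (Theta j)).
Proof. by have [_ _ _ [_ [dsumQ /(_ j) [_ QTh]]] _] := proj_sys; exact: dsum_hom_zero dsumQ QTh. Qed.

Lemma Qi_hom_zero_sh_K (i j : 'I_t) : hom_zero (Qi i) (sh (K j)).
Proof.
have [_ _ _ _ /(_ j) [_ filtK _]] := proj_sys.
by apply: (in_filt_hom_zero_sh filtK) => _ [l [_ ->]]; apply: Qi_hom_zero_sh_Theta.
Qed.

Lemma K_hom_zero_Theta (i j : 'I_t) : le i j -> hom_zero (K j) (Theta i).
Proof.
move=> le_ij; have [[_ anti trans _] _ ThTh _ /(_ j) [_ filtK _]] := proj_sys.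
apply: (in_filt_hom_zero filtK) => _ [l [gt_lj ->]].
exact/ThTh/(gtr_le_trans anti trans le_ij).
Qed.

Lemma dist_bc (i : 'I_t) : dist (b i) (c i) (- shm (a i)).
Proof. by have [_ _ _ _ /(_ i) [abc _ _]] := proj_sys; exact: dist_rot abc. Qed.

Lemma comp_b_eq0 (i : 'I_t) (x : Mor (Theta i) (Theta i)) : comp x (b i) = 0 -> x = 0.
Proof.
move=> xb; have [h ->] := dist_weak_coker (dist_bc i) xb.
by have [_ _ _ _ /(_ i) [_ _ /(_ h) ->]] := proj_sys; rewrite comp0l.
Qed.

Lemma idempotent_lift_iso (i : 'I_t) (e : Mor (Theta i) (Theta i)) (f : Mor (Qi i) (Qi i)) :
  comp e e = e -> comp e (b i) = comp (b i) f -> isIso f -> e = idm (Theta i).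
Proof.
move=> ee eb [f' [_ ff']].
have b_eq : b i = comp e (comp (b i) f') by rewrite compA eb -compA ff' compm1.
suff : idm (Theta i) - e = 0 by move/eqP; rewrite subr_eq0 => /eqP.
by apply: comp_b_eq0; rewrite b_eq compA compBl comp1m ee subrr comp0l.
Qed.

Lemma Theta_idempotent (i : 'I_t) (e : Mor (Theta i) (Theta i)) :
  krull_schmidt T -> comp e e = e -> e = 0 \/ e = idm (Theta i).
Proof.
move=> KS ee; have [f eb] : exists f, comp e (b i) = comp (b i) f.
  by apply: (dist_weak_ker (dist_bc i)); apply: Qi_hom_zero_sh_K.
have [_ _ _ [/(_ i) decQ _] _] := proj_sys.
have [isof|isoBf] := indecomposable_local KS decQ f; [right | left].
  exact: idempotent_lift_iso eb isof.
have Beb : comp (idm (Theta i) - e) (b i) = comp (b i) (idm (Qi i) - f).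
  by rewrite compBl compBr comp1m compm1 eb.
have := idempotent_lift_iso (idempotentB ee) Beb isoBf.
by move=> /(congr1 (fun x => idm (Theta i) - x)); rewrite subKr subrr.
Qed.

Lemma Theta_indecomposable : krull_schmidt T -> forall i, indecomposable (Theta i).
Proof.
move=> KS i; apply: indecomposable_of_idempotents => [|e]; last exact: Theta_idempotent.
by have [_ + _ _ _] := proj_sys; apply.
Qed.

Lemma Theta_hom_zero_sh : forall i j, le i j -> hom_zero (Theta j) (sh (Theta i)).
Proof.
move=> i j le_ij phi.
have [h ->] := dist_weak_coker (dist_bc j) (Qi_hom_zero_sh_Theta (comp phi (b j))).
by have [h' ->] := shm_surj h; rewrite (K_hom_zero_Theta le_ij h') shm0 comp0l.
Qed.

Lemma Theta_hom_zero_unsh :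
  (forall i j, hom_zero (sh (sh (K j))) (Theta i)) ->
  forall i j, hom_zero (Theta i) (unsh (Theta j)).
Proof.
move=> K2Th i j phi.
have [h ->] := dist_weak_coker (dist_bc i) (Qi_hom_zero_unsh_Theta (comp phi (b i))).
suff /shm_inj -> : shm h = shm 0 by rewrite comp0l.
(* [sh (unsh X)] is only isomorphic to [X]; transport along [psi]. *)
have [_ _ _ _ /(_ (Theta j)) [psi [psi' [psi'psi _]]]] := shift.
by rewrite shm0 -[shm h]comp1m -psi'psi -compA (K2Th j i (comp psi (shm h))) comp0r.
Qed.

End ThetaProjectiveSystem.
End Triangulated.
End LinearCategory.

Theorem corollary6p3 (R : comPzRingType) (T : TriData R)
    (HT : artin_triangulated T) (t : nat) (le : rel 'I_t)
    (Theta Qi K : 'I_t -> Obj T) (Q : Obj T)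
    (a : forall i, Mor (K i) (Qi i)) (b : forall i, Mor (Qi i) (Theta i))
    (c : forall i, Mor (Theta i) (sh (K i))) :
  theta_proj_system le Theta Qi K Q a b c ->
  (forall i j, hom_zero (sh (sh (K j))) (Theta i)) ->
  theta_system le Theta.
Proof.
case: HT => _ [lin shift tr1 tr2 [tr3 _]] _ KS proj_sys K2Th.
have [le_linear _ Theta_gtr _ _] := proj_sys.
split=> //.
- exact: (Theta_indecomposable lin shift tr1 tr2 tr3 proj_sys KS).
- exact: (Theta_hom_zero_sh lin shift tr1 tr2 tr3 proj_sys).
- exact: (Theta_hom_zero_unsh lin shift tr1 tr2 tr3 proj_sys K2Th).
Qed.
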